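(* There is an absolute constant $\alpha>0$ (independent of $n,c,\Delta,V$) such that the following holds. Let $c>4$, $\Delta>0$, $n\ge 2$, and let $V$ be a real $d\times n$ matrix with columns $\vec v_1,\dots,\vec v_n\in\mathbb{R}^d$. Let $S=\{i\in[n]: \mathbf{E}[D_i]\le c\}$ be the set of vertices of expected degree at most $c$ in $G\sim\mathcal{G}_V$. Suppose the expected number of triangles of $G\sim\mathcal{G}_V$ all three of whose vertices lie in $S$ is at least $\Delta n$. Then $$\mathrm{rank}(V)\ \ge\ \alpha\,\frac{\Delta^4}{c^9}\cdot\frac{n}{\lg^2 n}.$$ (The paper phrases this as $\mathrm{rank}(V)\ge \min(1,\mathrm{poly}(\Delta/c))\, n/\lg^2 n$.)
   Context: For vectors $\vec v_1,\dots,\vec v_n\in\mathbb{R}^d$ (columns of a matrix $V$), $\mathcal{G}_V$ is the distribution on simple undirected graphs with vertex set $[n]$ in which, independently for each unordered pair $\{i,j\}$ with $i\neq j$, the edge $(i,j)$ is present with probability $p_{ij}=\max(0,\min(\vec v_i\cdot\vec v_j,1))$. $D_i$ denotes the (random) degree of vertex $i$, so $\mathbf{E}[D_i]=\sum_{j\ne i}p_{ij}$. A triangle is a set of three distinct vertices that are pairwise adjacent. $\lg$ denotes the base-2 logarithm. *)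

From Stdlib Require Import Reals List Arith Bool.
Import ListNotations.
Open Scope bool_scope.
Open Scope R_scope.

Definition rsum (m : nat) (f : nat -> R) : R :=
  fold_right Rplus 0 (map f (seq 0 m)).

(* A real d x n matrix is V : nat -> nat -> R, entry (row i, column j) = V i j,
   only entries with i < d, j < n matter. Column j is the vector v_j (0-based). *)
Definition dotc (d : nat) (V : nat -> nat -> R) (j k : nat) : R :=
  rsum d (fun i => V i j * V i k).

Definition pedge (d : nat) (V : nat -> nat -> R) (j k : nat) : R :=
  Rmax 0 (Rmin (dotc d V j k) 1).

Definition exp_deg (d n : nat) (V : nat -> nat -> R) (j : nat) : R :=
  rsum n (fun k => if Nat.eqb k j then 0 else pedge d V j k).

Definition inS (d n : nat) (V : nat -> nat -> R) (c : R) (j : nat) : bool :=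
  if Rle_dec (exp_deg d n V j) c then true else false.

(* Expected number of triangles with all three vertices in S: by linearity of
   expectation and independence of the edges, the sum over i<j<k of
   p_ij p_jk p_ik restricted to triples inside S. *)
Definition exp_tri_S (d n : nat) (V : nat -> nat -> R) (c : R) : R :=
  rsum n (fun i => rsum n (fun j => rsum n (fun k =>
    if Nat.ltb i j && Nat.ltb j k && inS d n V c i && inS d n V c j && inS d n V c k
    then pedge d V i j * pedge d V j k * pedge d V i k
    else 0))).

Definition cols_indep (d n : nat) (V : nat -> nat -> R) (cols : list nat) : Prop :=
  NoDup cols /\ (forall j, In j cols -> (j < n)%nat) /\
  forall a : nat -> R,
    (forall i, (i < d)%nat ->
       rsum (length cols) (fun t => a t * V i (nth t cols 0%nat)) = 0) ->
    forall t, (t < length cols)%nat -> a t = 0.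

Definition is_rank (d n : nat) (V : nat -> nat -> R) (r : nat) : Prop :=
  (exists cols, cols_indep d n V cols /\ length cols = r) /\
  (forall cols, cols_indep d n V cols -> (length cols <= r)%nat).

Definition lg (x : R) : R := ln x / ln 2.

From Stdlib Require Import Reals List Lra Lia Psatz Classical Bool.
Open Scope R_scope.

(* Call a vertex i of S heavy if |v_i|^2 >= tau.  A triangle of S through a heavy vertex
   is charged to the two edges at that vertex, which costs at most c^2 per heavy vertex;
   a triangle with no heavy vertex has two light vertices i, j, and
   v_i . v_j <= (|v_i|^2 + |v_j|^2) / 2 < tau bounds its edge probability p_ij by tau,
   so these triangles contribute at most tau n c^2.  With tau = Delta / (12 c^2) there are
   h >= 11 Delta n / (36 c^2) heavy vertices.  The normalised heavy columns have a Gram matrix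
   G with trace h, entries in [-1, 1], nonnegative total sum, and positive part at most
   1 + c / tau in each row, so |G|_F^2 <= 2 h (1 + c / tau).  The inequality
   rank >= tr(G)^2 / |G|_F^2 gives rank V >= h / (2 (1 + c / tau)), which is of order
   Delta^2 n / c^5; this implies the claimed bound because Delta <= 4 c^2 and lg n >= 1. *)

Lemma rsum_0 f : rsum 0 f = 0.
Proof. reflexivity. Qed.

Lemma rsum_S m f : rsum (S m) f = rsum m f + f m.
Proof.
  unfold rsum. rewrite seq_S, map_app, fold_right_app. simpl.
  generalize (f m). induction (map f (seq 0 m)) as [|x l IH]; simpl; intros; [lra|].
  rewrite IH. lra.
Qed.

Lemma rsum_Sl m f : rsum (S m) f = f 0%nat + rsum m (fun k => f (S k)).
Proof.
  induction m as [|m IH]; [rewrite rsum_S, !rsum_0; lra|].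
  rewrite rsum_S, IH, rsum_S. lra.
Qed.

Lemma rsum_ext m f g : (forall k, (k < m)%nat -> f k = g k) -> rsum m f = rsum m g.
Proof.
  induction m as [|m IH]; intros H; [reflexivity|].
  rewrite !rsum_S, IH by (intros; apply H; lia). rewrite H by lia. reflexivity.
Qed.

Lemma rsum_le_compat m f g :
  (forall k, (k < m)%nat -> f k <= g k) -> rsum m f <= rsum m g.
Proof.
  induction m as [|m IH]; intros H; [rewrite !rsum_0; lra|].
  rewrite !rsum_S. apply Rplus_le_compat; [apply IH; intros; apply H|apply H]; lia.
Qed.

Lemma rsum_plus m f g : rsum m (fun k => f k + g k) = rsum m f + rsum m g.
Proof. induction m; [rewrite !rsum_0|rewrite !rsum_S, IHm]; lra. Qed.

Lemma rsum_mult_l m a f : rsum m (fun k => a * f k) = a * rsum m f.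
Proof. induction m; [rewrite !rsum_0|rewrite !rsum_S, IHm]; lra. Qed.

Lemma rsum_mult_r m a f : rsum m (fun k => f k * a) = rsum m f * a.
Proof. induction m; [rewrite !rsum_0|rewrite !rsum_S, IHm]; lra. Qed.

Lemma rsum_opp m f : rsum m (fun k => - f k) = - rsum m f.
Proof. induction m; [rewrite !rsum_0|rewrite !rsum_S, IHm]; lra. Qed.

Lemma rsum_const m a : rsum m (fun _ => a) = INR m * a.
Proof. induction m; [rewrite rsum_0; simpl|rewrite rsum_S, IHm, S_INR]; lra. Qed.

Lemma rsum_nonneg m f : (forall k, (k < m)%nat -> 0 <= f k) -> 0 <= rsum m f.
Proof.
  intros H. replace 0 with (rsum m (fun _ => 0)) by (rewrite rsum_const; ring).
  apply rsum_le_compat, H.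
Qed.

Lemma rsum_comm m n f :
  rsum m (fun i => rsum n (fun j => f i j)) = rsum n (fun j => rsum m (fun i => f i j)).
Proof.
  induction m as [|m IH].
  - rewrite rsum_0, (rsum_ext n _ (fun _ => 0)) by (intros; apply rsum_0).
    rewrite rsum_const; ring.
  - rewrite rsum_S, IH, <- rsum_plus. apply rsum_ext. intros. rewrite rsum_S. reflexivity.
Qed.

Lemma rsum_ge_term m f k :
  (forall k, (k < m)%nat -> 0 <= f k) -> (k < m)%nat -> f k <= rsum m f.
Proof.
  induction m as [|m IH]; intros H Hk; [lia|]. rewrite rsum_S.
  destruct (Nat.eq_dec k m) as [->|Hkm].
  - assert (0 <= rsum m f) by (apply rsum_nonneg; intros; apply H; lia). lra.
  - assert (f k <= rsum m f) by (apply IH; [intros; apply H|]; lia).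
    specialize (H m ltac:(lia)). lra.
Qed.

Lemma rsum_indicator m t a :
  (t < m)%nat -> rsum m (fun k => if Nat.eqb k t then a else 0) = a.
Proof.
  induction m as [|m IH]; intros H; [lia|]. rewrite rsum_S.
  destruct (Nat.eq_dec t m) as [->|Htm].
  - rewrite Nat.eqb_refl, (rsum_ext m _ (fun _ => 0)), rsum_const; [ring|].
    intros k Hk. destruct (Nat.eqb_spec k m); [lia|reflexivity].
  - rewrite IH by lia. destruct (Nat.eqb_spec m t); [lia|ring].
Qed.

Lemma rsum_mult_rsum m n f g :
  rsum m (fun i => rsum n (fun j => f i * g j)) = rsum m f * rsum n g.
Proof.
  rewrite <- rsum_mult_r. apply rsum_ext. intros. apply rsum_mult_l.
Qed.

Definition dot (d : nat) (u w : nat -> R) : R := rsum d (fun x => u x * w x).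

Lemma dot_comm d u w : dot d u w = dot d w u.
Proof. apply rsum_ext. intros; ring. Qed.

Lemma dot_ext d u u' w w' :
  (forall x, (x < d)%nat -> u x = u' x) -> (forall x, (x < d)%nat -> w x = w' x) ->
  dot d u w = dot d u' w'.
Proof. intros Hu Hw. apply rsum_ext. intros. rewrite Hu, Hw by assumption. reflexivity. Qed.

Lemma dot_plus_scal_l d u a w z : dot d (fun x => u x + a * w x) z = dot d u z + a * dot d w z.
Proof. unfold dot. rewrite <- rsum_mult_l, <- rsum_plus. apply rsum_ext; intros; ring. Qed.

Lemma dot_scal d a u b w : dot d (fun x => a * u x) (fun x => b * w x) = a * b * dot d u w.
Proof. unfold dot. rewrite <- rsum_mult_l. apply rsum_ext; intros; ring. Qed.

Lemma dot_0_l d w : dot d (fun _ => 0) w = 0.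
Proof. unfold dot. rewrite (rsum_ext d _ (fun _ => 0)), rsum_const by (intros; ring). ring. Qed.

Lemma dot_self_nonneg d u : 0 <= dot d u u.
Proof. apply rsum_nonneg. intros. nra. Qed.

Lemma dot_self_eq_0 d u : dot d u u = 0 -> forall x, (x < d)%nat -> u x = 0.
Proof.
  intros H x Hx. assert (u x * u x <= dot d u u).
  { apply (rsum_ge_term d (fun x => u x * u x)); [intros; nra|assumption]. }
  nra.
Qed.

Lemma Rabs_dot_le_half d u w : 2 * Rabs (dot d u w) <= dot d u u + dot d w w.
Proof.
  pose proof (dot_self_nonneg d (fun x => u x - w x)).
  pose proof (dot_self_nonneg d (fun x => u x + w x)).
  assert (dot d (fun x => u x - w x) (fun x => u x - w x) = dot d u u + dot d w w - 2 * dot d u w).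
  { unfold dot, Rminus. rewrite <- rsum_mult_l, <- rsum_opp, <- !rsum_plus.
    apply rsum_ext; intros; ring. }
  assert (dot d (fun x => u x + w x) (fun x => u x + w x) = dot d u u + dot d w w + 2 * dot d u w).
  { unfold dot. rewrite <- rsum_mult_l, <- !rsum_plus. apply rsum_ext; intros; ring. }
  unfold Rabs. destruct Rcase_abs; lra.
Qed.

Lemma gram_form_nonneg d m (a : nat -> R) (z : nat -> nat -> R) :
  0 <= rsum m (fun i => rsum m (fun j => a i * a j * dot d (z i) (z j))).
Proof.
  set (w := fun x => rsum m (fun i => a i * z i x)).
  replace (rsum m _) with (dot d w w); [apply dot_self_nonneg|].
  unfold dot, w.
  transitivity (rsum d (fun x => rsum m (fun i => rsum m (fun j => a i * z i x * (a j * z j x))))).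
  { apply rsum_ext; intros. symmetry. apply rsum_mult_rsum. }
  rewrite rsum_comm. apply rsum_ext; intros i _.
  rewrite rsum_comm. apply rsum_ext; intros j _.
  rewrite <- rsum_mult_l. apply rsum_ext; intros; ring.
Qed.

Definition in_span (d r : nat) (b : nat -> nat -> R) (y : nat -> R) : Prop :=
  exists a : nat -> R, forall x, (x < d)%nat -> y x = rsum r (fun k => a k * b k x).

Lemma in_span_0 d b y : in_span d 0 b y -> forall x, (x < d)%nat -> y x = 0.
Proof. intros [a Ha] x Hx. rewrite Ha by assumption. apply rsum_0. Qed.

Lemma in_span_drop_null d r b y :
  (forall x, (x < d)%nat -> b 0%nat x = 0) ->
  in_span d (S r) b y -> in_span d r (fun k => b (S k)) y.
Proof.
  intros Hb [a Ha]. exists (fun k => a (S k)). intros x Hx.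
  rewrite Ha, rsum_Sl, Hb by assumption. ring.
Qed.

Definition proj_out (d : nat) (e u : nat -> R) : nat -> R :=
  fun x => u x + (- (dot d u e / dot d e e)) * e x.

Lemma dot_proj_out d e u : dot d e e <> 0 -> dot d (proj_out d e u) e = 0.
Proof. intros He. unfold proj_out. rewrite dot_plus_scal_l. field. exact He. Qed.

Lemma in_span_proj_out d r b y :
  dot d (b 0%nat) (b 0%nat) <> 0 -> in_span d (S r) b y ->
  in_span d r (fun k => proj_out d (b 0%nat) (b (S k))) (proj_out d (b 0%nat) y).
Proof.
  intros He [a Ha]. exists (fun k => a (S k)). intros x Hx.
  set (e := b 0%nat) in *.
  assert (Hye : dot d y e = a 0%nat * dot d e e + rsum r (fun k => a (S k) * dot d (b (S k)) e)).
  { unfold dot. rewrite <- rsum_mult_l.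
    rewrite (rsum_ext d _ (fun z => rsum (S r) (fun k => a k * b k z * e z)))
      by (intros z Hz; rewrite Ha, rsum_mult_r by assumption; reflexivity).
    rewrite rsum_comm, rsum_Sl. f_equal.
    - apply rsum_ext. intros. unfold e. ring.
    - apply rsum_ext. intros. rewrite <- rsum_mult_l. apply rsum_ext. intros. ring. }
  unfold proj_out.
  rewrite (rsum_ext r _ (fun k => a (S k) * b (S k) x
                                 + (- / dot d e e * e x) * (a (S k) * dot d (b (S k)) e)))
    by (intros; field; exact He).
  rewrite rsum_plus, rsum_mult_l, Hye, Ha, rsum_Sl by assumption.
  fold e. field. exact He.
Qed.

Lemma dot_orth_plus d p q e s t : dot d p e = 0 -> dot d q e = 0 ->
  dot d (fun x => p x + s * e x) (fun x => q x + t * e x) = dot d p q + s * t * dot d e e.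
Proof.
  intros Hp Hq.
  rewrite dot_plus_scal_l, (dot_comm d p), (dot_comm d e (fun x => q x + t * e x)).
  rewrite !dot_plus_scal_l, (dot_comm d e p), Hp, Hq, (dot_comm d q p). ring.
Qed.

Lemma rsum_sqr_plus_rank_one m (P : nat -> nat -> R) (s : nat -> R) beta :
  rsum m (fun i => rsum m (fun j => (P i j + beta * (s i * s j)) ^ 2)) =
  rsum m (fun i => rsum m (fun j => P i j ^ 2))
  + 2 * beta * rsum m (fun i => rsum m (fun j => s i * s j * P i j))
  + (beta * rsum m (fun i => s i * s i)) * (beta * rsum m (fun i => s i * s i)).
Proof.
  rewrite <- (rsum_mult_l m beta (fun i => s i * s i)).
  rewrite <- (rsum_mult_rsum m m (fun i => beta * (s i * s i)) (fun i => beta * (s i * s i))).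
  rewrite <- (rsum_mult_l m (2 * beta)), <- !rsum_plus.
  apply rsum_ext; intros i _.
  rewrite <- !rsum_mult_l, <- !rsum_plus. apply rsum_ext; intros; ring.
Qed.

Lemma sqr_plus_le_succ_mul (r A B F G : R) :
  0 <= r -> A * A <= r * F -> 0 <= F -> 0 <= G -> 0 <= A ->
  (A + B) ^ 2 <= (r + 1) * (F + G + B * B).
Proof.
  intros Hr HA HF HG HA0.
  destruct (Req_dec r 0) as [->|Hr0]; [assert (A = 0) by nra; subst; nra|].
  apply (Rmult_le_reg_l r); [lra|].
  assert (r * (A + B) ^ 2 <= (r + 1) * (A * A + r * (B * B))).
  { pose proof (Rle_0_sqr (A - r * B)). unfold Rsqr in *. nra. }
  assert ((r + 1) * (A * A) <= (r + 1) * (r * F)) by (apply Rmult_le_compat_l; lra).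
  assert (0 <= (r + 1) * (r * G)) by (apply Rmult_le_pos; [|apply Rmult_le_pos]; lra).
  nra.
Qed.

(* Induction on the number of spanning vectors: projecting every [y i] off [b 0] splits the
   Gram matrix into the Gram matrix of the projections plus a positive rank-one term. *)
Lemma sqr_trace_le_rank_frobenius d r : forall (b : nat -> nat -> R) m (y : nat -> nat -> R),
  (forall i, (i < m)%nat -> in_span d r b (y i)) ->
  (rsum m (fun i => dot d (y i) (y i))) ^ 2 <=
    INR r * rsum m (fun i => rsum m (fun j => dot d (y i) (y j) ^ 2)).
Proof.
  induction r as [|r IH]; intros b m y Hy.
  - rewrite (rsum_ext m _ (fun _ => 0)), rsum_const; [simpl; lra|].
    intros i Hi. rewrite (dot_ext d (y i) (fun _ => 0) (y i) (y i)), dot_0_l; [reflexivity| |easy].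
    exact (in_span_0 d b (y i) (Hy i Hi)).
  - set (e := b 0%nat). set (beta := dot d e e).
    assert (HF : 0 <= rsum m (fun i => rsum m (fun j => dot d (y i) (y j) ^ 2)))
      by (apply rsum_nonneg; intros; apply rsum_nonneg; intros; nra).
    destruct (Req_dec beta 0) as [Hb|Hb].
    + eapply Rle_trans; [apply (IH (fun k => b (S k)))|rewrite S_INR; nra].
      intros i Hi. apply in_span_drop_null; [apply dot_self_eq_0, Hb|apply Hy, Hi].
    + set (s := fun i => dot d (y i) e / beta).
      set (p := fun i => proj_out d e (y i)).
      assert (Hyy : forall i j, dot d (y i) (y j) = dot d (p i) (p j) + beta * (s i * s j)).
      { intros i j.
        rewrite (dot_ext d (y i) (fun x => p i x + s i * e x) (y j) (fun x => p j x + s j * e x))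
          by (intros; unfold p, proj_out, s, beta; ring).
        rewrite dot_orth_plus by (apply dot_proj_out, Hb). fold beta. ring. }
      assert (IHp := IH _ m p (fun i Hi => in_span_proj_out d r b (y i) Hb (Hy i Hi))).
      rewrite (rsum_ext m (fun i => dot d (y i) (y i))
                 (fun i => dot d (p i) (p i) + beta * (s i * s i))) by (intros; apply Hyy).
      rewrite (rsum_ext m (fun i => rsum m (fun j => dot d (y i) (y j) ^ 2))
                 (fun i => rsum m (fun j => (dot d (p i) (p j) + beta * (s i * s j)) ^ 2)))
        by (intros; apply rsum_ext; intros; rewrite Hyy; reflexivity).
      rewrite rsum_plus, rsum_mult_l, (rsum_sqr_plus_rank_one m (fun i j => dot d (p i) (p j))).
      rewrite S_INR. apply sqr_plus_le_succ_mul.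
      * apply pos_INR.
      * rewrite <- Rsqr_pow2 in IHp. exact IHp.
      * apply rsum_nonneg; intros; apply rsum_nonneg; intros; nra.
      * pose proof (gram_form_nonneg d m s p) as Hg.
        pose proof (dot_self_nonneg d e) as Hbeta. fold beta in Hbeta. nra.
      * apply rsum_nonneg; intros; apply dot_self_nonneg.
Qed.

Lemma in_span_scal d r b y s : in_span d r b y -> in_span d r b (fun x => s * y x).
Proof.
  intros [a Ha]. exists (fun k => s * a k). intros x Hx.
  rewrite Ha, <- rsum_mult_l by assumption. apply rsum_ext. intros. ring.
Qed.

Lemma in_span_zero d r b : in_span d r b (fun _ => 0).
Proof.
  exists (fun _ => 0). intros.
  rewrite (rsum_ext r _ (fun _ => 0)), rsum_const by (intros; ring). ring.
Qed.

Definition col (V : nat -> nat -> R) (j : nat) : nat -> R := fun x => V x j.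

Lemma cols_indep_cons d n V cols j :
  cols_indep d n V cols -> (j < n)%nat ->
  ~ in_span d (length cols) (fun k => col V (nth k cols 0%nat)) (col V j) ->
  cols_indep d n V (j :: cols).
Proof.
  intros [Hnd [Hlt Hind]] Hj Hns. split; [|split].
  - constructor; [|exact Hnd]. intros Hin. apply Hns.
    destruct (In_nth cols j 0%nat Hin) as [t [Ht Hnt]].
    exists (fun k => if Nat.eqb k t then 1 else 0). intros x Hx.
    rewrite (rsum_ext _ _ (fun k => if Nat.eqb k t then V x j else 0)).
    + rewrite rsum_indicator by exact Ht. reflexivity.
    + intros k Hk. unfold col. destruct (Nat.eqb_spec k t) as [->|]; [rewrite Hnt|]; ring.
  - intros k [<-|Hk]; auto.
  - intros a Ha t Ht. simpl length in Ha, Ht.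
    assert (Ha' : forall i, (i < d)%nat ->
              a 0%nat * V i j + rsum (length cols) (fun t => a (S t) * V i (nth t cols 0%nat)) = 0).
    { intros i Hi. rewrite <- (Ha i Hi), rsum_Sl. reflexivity. }
    assert (H0 : a 0%nat = 0).
    { destruct (Req_dec (a 0%nat) 0) as [|Hnz]; [assumption|]. exfalso. apply Hns.
      exists (fun t => - a (S t) / a 0%nat). intros x Hx. unfold col.
      rewrite (rsum_ext _ _ (fun t => - / a 0%nat * (a (S t) * V x (nth t cols 0%nat))))
        by (intros; field; exact Hnz).
      rewrite rsum_mult_l. specialize (Ha' x Hx).
      apply (Rmult_eq_reg_l (a 0%nat)); [|exact Hnz]. field_simplify; [lra|exact Hnz]. }
    destruct t as [|t]; [exact H0|].
    apply (Hind (fun t => a (S t))); [|lia].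
    intros i Hi. specialize (Ha' i Hi). rewrite H0 in Ha'. lra.
Qed.

Lemma rank_spanning_cols d n V r : is_rank d n V r ->
  exists cols, length cols = r /\
    forall j, (j < n)%nat -> in_span d r (fun k => col V (nth k cols 0%nat)) (col V j).
Proof.
  intros [[cols [Hc Hl]] Hmax]. exists cols. split; [exact Hl|]. subst r.
  intros j Hj. apply NNPP. intros Hns.
  pose proof (Hmax _ (cols_indep_cons d n V cols j Hc Hj Hns)) as Hlen. simpl in Hlen. lia.
Qed.

Lemma pos_part_div_le (t s tau : R) : 0 < tau <= s -> tau <= 1 -> t / s <= 1 ->
  Rmax 0 (t / s) <= Rmax 0 (Rmin t 1) / tau.
Proof.
  intros [Htau Hs] Htau1 Hts.
  assert (Hinv : / s <= / tau) by (apply Rinv_le_contravar; lra).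
  assert (Hinv1 : 1 <= / tau) by (rewrite <- Rinv_1; apply Rinv_le_contravar; lra).
  unfold Rdiv in *. unfold Rmax at 1.
  destruct Rle_dec as [Hpos|]; [|apply Rmult_le_pos; [apply Rmax_l|lra]].
  assert (0 <= t)
    by (destruct (Rle_lt_dec 0 t); [assumption|]; pose proof (Rinv_0_lt_compat s); nra).
  unfold Rmin. destruct Rle_dec.
  - rewrite Rmax_right by lra. nra.
  - rewrite Rmax_right by lra. lra.
Qed.

Definition ind (b : bool) : R := if b then 1 else 0.

Lemma ind_bounds b : 0 <= ind b <= 1.
Proof. destruct b; simpl; lra. Qed.

Section HeavyVertices.

Variables (d n : nat) (V : nat -> nat -> R) (c tau : R).

Definition padj (j k : nat) : R := if Nat.eqb k j then 0 else pedge d V j k.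

Definition sqnorm (i : nat) : R := dotc d V i i.

Definition heavy (i : nat) : bool :=
  inS d n V c i && (if Rle_dec tau (sqnorm i) then true else false).

Definition num_heavy : R := rsum n (fun i => ind (heavy i)).

Lemma pedge_bounds j k : 0 <= pedge d V j k <= 1.
Proof. unfold pedge, Rmax, Rmin. repeat destruct Rle_dec; lra. Qed.

Lemma pedge_comm j k : pedge d V j k = pedge d V k j.
Proof.
  unfold pedge, dotc. rewrite (rsum_ext d _ (fun i => V i k * V i j)) by (intros; ring).
  reflexivity.
Qed.

Lemma padj_bounds j k : 0 <= padj j k <= 1.
Proof. unfold padj. destruct Nat.eqb; [lra|apply pedge_bounds]. Qed.

Lemma padj_neq j k : j <> k -> padj j k = pedge d V j k.
Proof. intros. unfold padj. destruct (Nat.eqb_spec k j); [lia|reflexivity]. Qed.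

Lemma exp_deg_padj j : exp_deg d n V j = rsum n (padj j).
Proof. reflexivity. Qed.

Lemma exp_deg_nonneg j : 0 <= exp_deg d n V j.
Proof. apply rsum_nonneg. intros; apply padj_bounds. Qed.

Lemma inS_exp_deg j : inS d n V c j = true -> exp_deg d n V j <= c.
Proof. unfold inS. destruct Rle_dec; [easy|discriminate]. Qed.

Lemma ind_inS_mul_exp_deg j : 0 <= c -> ind (inS d n V c j) * exp_deg d n V j <= c.
Proof.
  intros Hc. destruct (inS d n V c j) eqn:Hj; simpl.
  - pose proof (inS_exp_deg j Hj). lra.
  - lra.
Qed.

Lemma heavy_inS j : heavy j = true -> inS d n V c j = true.
Proof. unfold heavy. rewrite andb_true_iff. tauto. Qed.

Lemma heavy_sqnorm j : heavy j = true -> tau <= sqnorm j.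
Proof. unfold heavy. rewrite andb_true_iff. destruct Rle_dec; intuition discriminate. Qed.

Lemma light_sqnorm j : inS d n V c j = true -> heavy j = false -> sqnorm j < tau.
Proof. unfold heavy. intros ->. simpl. destruct Rle_dec; [discriminate|lra]. Qed.

Lemma pedge_light_lt i j :
  inS d n V c i = true -> inS d n V c j = true -> heavy i = false -> heavy j = false ->
  pedge d V i j < tau.
Proof.
  intros Si Sj Hi Hj.
  pose proof (light_sqnorm i Si Hi). pose proof (light_sqnorm j Sj Hj).
  pose proof (Rabs_dot_le_half d (col V i) (col V j)) as Hij.
  pose proof (Rle_abs (dot d (col V i) (col V j))).
  pose proof (dot_self_nonneg d (col V i)).
  change (dot d (col V i) (col V j)) with (dotc d V i j) in *.
  change (dot d (col V i) (col V i)) with (sqnorm i) in *.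
  change (dot d (col V j) (col V j)) with (sqnorm j) in *.
  unfold pedge, Rmax, Rmin. repeat destruct Rle_dec; lra.
Qed.

Definition tri_term (i j k : nat) : R :=
  if Nat.ltb i j && Nat.ltb j k && inS d n V c i && inS d n V c j && inS d n V c k
  then pedge d V i j * pedge d V j k * pedge d V i k else 0.

Lemma tri_term_le i j k : 0 < tau ->
  tri_term i j k <=
    tau * (ind (inS d n V c i) * ind (inS d n V c k) * (padj i k * padj k j))
    + ind (heavy i) * (padj i j * padj i k)
    + ind (heavy j) * (padj j i * padj j k)
    + ind (heavy k) * (padj k i * padj k j).
Proof.
  intros Htau. unfold tri_term.
  assert (U : forall x y, 0 <= x <= 1 -> 0 <= y <= 1 -> 0 <= x * y <= 1) by (intros; split; nra).
  pose proof (U _ _ (ind_bounds (heavy i)) (U _ _ (padj_bounds i j) (padj_bounds i k))).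
  pose proof (U _ _ (ind_bounds (heavy j)) (U _ _ (padj_bounds j i) (padj_bounds j k))).
  pose proof (U _ _ (ind_bounds (heavy k)) (U _ _ (padj_bounds k i) (padj_bounds k j))).
  pose proof (U _ _ (U _ _ (ind_bounds (inS d n V c i)) (ind_bounds (inS d n V c k)))
                    (U _ _ (padj_bounds i k) (padj_bounds k j))).
  destruct (Nat.ltb i j && Nat.ltb j k && inS d n V c i && inS d n V c j && inS d n V c k) eqn:E;
    [|nra].
  repeat rewrite andb_true_iff in E. destruct E as [[[[Hij Hjk] Si] Sj] Sk].
  apply Nat.ltb_lt in Hij, Hjk.
  rewrite !padj_neq in * by lia.
  rewrite (pedge_comm j i), (pedge_comm k i), (pedge_comm k j) in *.
  pose proof (pedge_bounds i j). pose proof (pedge_bounds j k). pose proof (pedge_bounds i k).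
  destruct (heavy i) eqn:Hi; [simpl in *; nra|].
  destruct (heavy j) eqn:Hj; [simpl in *; nra|].
  destruct (heavy k) eqn:Hk; [simpl in *; nra|].
  pose proof (pedge_light_lt i j Si Sj Hi Hj). rewrite Si, Sk in *. simpl in *. nra.
Qed.

Definition rsum3 (f : nat -> nat -> nat -> R) : R :=
  rsum n (fun i => rsum n (fun j => rsum n (fun k => f i j k))).

Lemma rsum3_le_compat f g :
  (forall i j k, f i j k <= g i j k) -> rsum3 f <= rsum3 g.
Proof. intros H. do 3 (apply rsum_le_compat; intros ? _). apply H. Qed.

Lemma rsum3_plus f g :
  rsum3 (fun i j k => f i j k + g i j k) = rsum3 f + rsum3 g.
Proof.
  unfold rsum3. rewrite <- rsum_plus. apply rsum_ext; intros.
  rewrite <- rsum_plus. apply rsum_ext; intros. apply rsum_plus.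
Qed.

Lemma light_triangles_le : 0 < tau -> 0 <= c ->
  rsum3 (fun i j k => tau * (ind (inS d n V c i) * ind (inS d n V c k) * (padj i k * padj k j)))
  <= tau * INR n * (c * c).
Proof.
  intros Htau Hc. unfold rsum3.
  replace (tau * INR n * (c * c)) with (rsum n (fun _ => tau * (c * c)))
    by (rewrite rsum_const; ring).
  apply rsum_le_compat. intros i _. rewrite rsum_comm.
  set (Si := ind (inS d n V c i)).
  rewrite (rsum_ext n _ (fun k => tau * Si * padj i k * (ind (inS d n V c k) * exp_deg d n V k)))
    by (intros; rewrite exp_deg_padj, <- !rsum_mult_l; apply rsum_ext; intros; ring).
  apply Rle_trans with (rsum n (fun k => tau * c * Si * padj i k)).
  - apply rsum_le_compat. intros k _.
    pose proof (ind_bounds (inS d n V c i)) as HSi. fold Si in HSi.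
    pose proof (padj_bounds i k). pose proof (ind_inS_mul_exp_deg k Hc).
    assert (0 <= tau * Si * padj i k) by (apply Rmult_le_pos; [apply Rmult_le_pos|]; lra).
    nra.
  - rewrite rsum_mult_l, <- exp_deg_padj.
    pose proof (ind_inS_mul_exp_deg i Hc) as HSi. fold Si in HSi.
    assert (tau * c * (Si * exp_deg d n V i) <= tau * c * c) by (apply Rmult_le_compat_l; nra).
    lra.
Qed.

Lemma heavy_triangles_le : 0 <= c ->
  rsum3 (fun i j k => ind (heavy i) * (padj i j * padj i k)) <= c * c * num_heavy.
Proof.
  intros Hc. unfold rsum3, num_heavy. rewrite <- rsum_mult_l. apply rsum_le_compat. intros i _.
  rewrite (rsum_ext n _ (fun j => rsum n (fun k => ind (heavy i) * padj i j * padj i k)))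
    by (intros; apply rsum_ext; intros; ring).
  rewrite rsum_mult_rsum, rsum_mult_l, <- exp_deg_padj.
  pose proof (exp_deg_nonneg i).
  destruct (heavy i) eqn:Hi; simpl; [|lra].
  pose proof (inS_exp_deg i (heavy_inS i Hi)). nra.
Qed.

Lemma exp_tri_S_le : 0 < tau -> 0 <= c ->
  exp_tri_S d n V c <= tau * INR n * (c * c) + 3 * (c * c) * num_heavy.
Proof.
  intros Htau Hc.
  change (exp_tri_S d n V c) with (rsum3 tri_term).
  eapply Rle_trans; [apply rsum3_le_compat; intros; apply tri_term_le, Htau|].
  rewrite !rsum3_plus.
  pose proof (light_triangles_le Htau Hc). pose proof (heavy_triangles_le Hc).
  set (Hsum := rsum3 (fun i j k => ind (heavy i) * (padj i j * padj i k))) in *.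
  assert (Hj : rsum3 (fun i j k => ind (heavy j) * (padj j i * padj j k)) = Hsum)
    by apply rsum_comm.
  assert (Hk : rsum3 (fun i j k => ind (heavy k) * (padj k i * padj k j)) = Hsum).
  { unfold rsum3. rewrite (rsum_ext n _ (fun i => rsum n (fun k => rsum n (fun j =>
      ind (heavy k) * (padj k i * padj k j))))) by (intros; apply rsum_comm).
    apply rsum_comm. }
  lra.
Qed.

Definition unit_heavy (i : nat) : nat -> R :=
  if heavy i then fun x => / sqrt (sqnorm i) * V x i else fun _ => 0.

Definition gram (i j : nat) : R := dot d (unit_heavy i) (unit_heavy j).

Lemma gram_heavy i j : heavy i = true -> heavy j = true ->
  gram i j = dotc d V i j / (sqrt (sqnorm i) * sqrt (sqnorm j)).
Proof.
  intros Hi Hj. unfold gram, unit_heavy. rewrite Hi, Hj, dot_scal.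
  change (dot d (fun x => V x i) (fun x => V x j)) with (dotc d V i j).
  unfold Rdiv. rewrite Rinv_mult. ring.
Qed.

Lemma gram_light_l i j : heavy i = false -> gram i j = 0.
Proof. intros Hi. unfold gram, unit_heavy at 1. rewrite Hi. apply dot_0_l. Qed.

Lemma gram_light_r i j : heavy j = false -> gram i j = 0.
Proof.
  intros Hj. unfold gram. rewrite dot_comm. unfold unit_heavy at 1. rewrite Hj. apply dot_0_l.
Qed.

Lemma gram_diag i : 0 < tau -> gram i i = ind (heavy i).
Proof.
  intros Htau. destruct (heavy i) eqn:Hi; [|apply gram_light_l, Hi].
  rewrite gram_heavy, sqrt_sqrt by (try assumption; apply dot_self_nonneg).
  pose proof (heavy_sqnorm i Hi). unfold sqnorm. simpl. field. fold (sqnorm i). lra.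
Qed.

Lemma Rabs_gram_le_1 i j : 0 < tau -> Rabs (gram i j) <= 1.
Proof.
  intros Htau. pose proof (Rabs_dot_le_half d (unit_heavy i) (unit_heavy j)) as H.
  fold (gram i j) (gram i i) (gram j j) in H. rewrite !gram_diag in H by assumption.
  pose proof (ind_bounds (heavy i)). pose proof (ind_bounds (heavy j)). lra.
Qed.

Lemma gram_pos_part_le i j : 0 < tau -> tau <= 1 ->
  Rmax 0 (gram i j) <= ind (heavy i) * (ind (Nat.eqb j i) + padj i j / tau).
Proof.
  intros Htau Htau1.
  assert (0 <= padj i j / tau) by (apply Rle_mult_inv_pos; [apply padj_bounds|assumption]).
  destruct (heavy i) eqn:Hi; [|rewrite gram_light_l, Rmax_left by (assumption || lra); simpl; lra].
  destruct (Nat.eqb_spec j i) as [->|Hji].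
  { rewrite gram_diag, Hi, Rmax_right by (assumption || simpl; lra). simpl. lra. }
  destruct (heavy j) eqn:Hj; [|rewrite gram_light_r, Rmax_left by (assumption || lra); simpl; lra].
  simpl. rewrite Rplus_0_l, Rmult_1_l, padj_neq by congruence.
  pose proof (Rabs_gram_le_1 i j Htau) as Hg. pose proof (Rle_abs (gram i j)).
  rewrite gram_heavy in * by assumption.
  apply pos_part_div_le; [split|assumption|lra]; [assumption|].
  rewrite <- sqrt_mult, <- (sqrt_square tau) by (lra || apply dot_self_nonneg).
  apply sqrt_le_1_alt, Rmult_le_compat; [lra|lra|apply heavy_sqnorm, Hi|apply heavy_sqnorm, Hj].
Qed.

Lemma sum_gram_pos_part_le : 0 < tau -> tau <= 1 -> 0 <= c ->
  rsum n (fun i => rsum n (fun j => Rmax 0 (gram i j))) <= num_heavy * (1 + c / tau).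
Proof.
  intros Htau Htau1 Hc. unfold num_heavy. rewrite <- rsum_mult_r.
  apply rsum_le_compat. intros i Hi.
  eapply Rle_trans; [apply rsum_le_compat; intros j _; apply gram_pos_part_le; assumption|].
  rewrite rsum_mult_l, rsum_plus.
  assert (Hdiag : rsum n (fun j => ind (Nat.eqb j i)) = 1) by (apply rsum_indicator, Hi).
  unfold Rdiv. rewrite Hdiag, rsum_mult_r, <- exp_deg_padj.
  destruct (heavy i) eqn:Hh; simpl; [|lra].
  pose proof (inS_exp_deg i (heavy_inS i Hh)). pose proof (Rinv_0_lt_compat tau Htau). nra.
Qed.

(* Entries of [gram] lie in [[-1, 1]], so [g^2 <= 2 max(0, g) - g]; and [gram] is positive
   semidefinite, so its entries have a nonnegative sum. *)
Lemma sum_gram_sqr_le : 0 < tau -> tau <= 1 -> 0 <= c ->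
  rsum n (fun i => rsum n (fun j => gram i j ^ 2)) <= 2 * num_heavy * (1 + c / tau).
Proof.
  intros Htau Htau1 Hc.
  apply Rle_trans with (rsum n (fun i => rsum n (fun j => 2 * Rmax 0 (gram i j) + - gram i j))).
  { apply rsum_le_compat; intros i _; apply rsum_le_compat; intros j _.
    pose proof (Rabs_gram_le_1 i j Htau).
    unfold Rmax, Rabs in *. destruct Rle_dec, Rcase_abs; nra. }
  rewrite (rsum_ext n _ (fun i => 2 * rsum n (fun j => Rmax 0 (gram i j))
                                 + - rsum n (fun j => gram i j)))
    by (intros; rewrite <- rsum_mult_l, <- rsum_opp, <- rsum_plus; reflexivity).
  rewrite rsum_plus, rsum_mult_l, rsum_opp.
  assert (Hpsd : 0 <= rsum n (fun i => rsum n (fun j => gram i j))).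
  { rewrite (rsum_ext n _ (fun i => rsum n (fun j => 1 * 1 * dot d (unit_heavy i) (unit_heavy j))))
      by (intros; apply rsum_ext; intros; unfold gram; ring).
    apply gram_form_nonneg. }
  pose proof (sum_gram_pos_part_le Htau Htau1 Hc). lra.
Qed.

Lemma num_heavy_sqr_le_rank r : is_rank d n V r -> 0 < tau -> tau <= 1 -> 0 <= c ->
  num_heavy * num_heavy <= INR r * (2 * num_heavy * (1 + c / tau)).
Proof.
  intros Hr Htau Htau1 Hc.
  destruct (rank_spanning_cols d n V r Hr) as [cols [_ Hspan]].
  assert (Hy : forall i, (i < n)%nat ->
                 in_span d r (fun k => col V (nth k cols 0%nat)) (unit_heavy i)).
  { intros i Hi. unfold unit_heavy. destruct (heavy i).
    - apply in_span_scal, Hspan, Hi.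
    - apply in_span_zero. }
  pose proof (sqr_trace_le_rank_frobenius d r _ n unit_heavy Hy) as Hrank.
  rewrite (rsum_ext n _ (fun i => ind (heavy i))), <- Rsqr_pow2 in Hrank
    by (intros; apply gram_diag, Htau).
  eapply Rle_trans; [exact Hrank|].
  apply Rmult_le_compat_l; [apply pos_INR|apply sum_gram_sqr_le; assumption].
Qed.

End HeavyVertices.

Lemma num_heavy_le d n V c tau : num_heavy d n V c tau <= INR n.
Proof.
  rewrite <- (Rmult_1_r (INR n)), <- rsum_const.
  apply rsum_le_compat. intros. apply ind_bounds.
Qed.

Lemma triangle_density_le d n V c Delta : 0 <= c -> (0 < n)%nat ->
  exp_tri_S d n V c >= Delta * INR n -> Delta <= 4 * (c * c).
Proof.
  intros Hc Hn Htri.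
  pose proof (exp_tri_S_le d n V c 1 Rlt_0_1 Hc).
  pose proof (num_heavy_le d n V c 1).
  apply Rmult_le_reg_r with (INR n); [apply lt_0_INR, Hn|]. nra.
Qed.

Lemma num_heavy_mul_le d n V c tau r : is_rank d n V r -> 0 < tau -> tau <= 1 -> 0 <= c ->
  num_heavy d n V c tau * tau <= 2 * INR r * (tau + c).
Proof.
  intros Hr Htau Htau1 Hc.
  pose proof (num_heavy_sqr_le_rank d n V c tau r Hr Htau Htau1 Hc) as Hsq.
  set (h := num_heavy d n V c tau) in *.
  assert (Hh : 0 <= h) by (apply rsum_nonneg; intros; apply ind_bounds).
  assert (Hh' : h <= 2 * INR r * (1 + c / tau)).
  { destruct (Req_dec h 0) as [->|Hh0]; [|apply (Rmult_le_reg_l h); nra].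
    pose proof (pos_INR r). assert (0 <= c / tau) by (apply Rle_mult_inv_pos; lra). nra. }
  replace (tau + c) with ((1 + c / tau) * tau) by (field; lra).
  rewrite <- Rmult_assoc. apply Rmult_le_compat_r; lra.
Qed.

Lemma rank_lower_bound d n V c Delta r : 1 <= c -> 0 < Delta -> (0 < n)%nat ->
  exp_tri_S d n V c >= Delta * INR n -> is_rank d n V r ->
  11 * Delta ^ 2 * INR n <= 1152 * c ^ 5 * INR r.
Proof.
  intros Hc HD Hn Htri Hr.
  set (tau := Delta / (12 * (c * c))).
  assert (HN : 0 < INR n) by (apply lt_0_INR, Hn).
  pose proof (triangle_density_le d n V c Delta ltac:(lra) Hn Htri) as HD4.
  assert (HDt : Delta = 12 * (c * c) * tau) by (unfold tau; field; lra).
  assert (Htau : 0 < tau) by (apply Rdiv_lt_0_compat; nra).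
  assert (Htau1 : tau <= 1) by nra.
  pose proof (exp_tri_S_le d n V c tau Htau ltac:(lra)) as Hlow.
  pose proof (num_heavy_mul_le d n V c tau r Hr Htau Htau1 ltac:(lra)) as Hup.
  set (h := num_heavy d n V c tau) in *.
  assert (H1 : 11 * Delta * INR n <= 36 * (c * c) * h) by nra.
  assert (H2 : h * Delta <= 2 * INR r * (Delta + 12 * (c * c * c))).
  { rewrite HDt.
    replace (h * (12 * (c * c) * tau)) with (12 * (c * c) * (h * tau)) by ring.
    replace (2 * INR r * (12 * (c * c) * tau + 12 * (c * c * c)))
      with (12 * (c * c) * (2 * INR r * (tau + c))) by ring.
    apply Rmult_le_compat_l; nra. }
  pose proof (pos_INR r) as Hr0.
  assert (H3 : 11 * Delta * INR n * Delta <= 36 * (c * c) * (h * Delta))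
    by (rewrite <- Rmult_assoc; apply Rmult_le_compat_r; lra).
  assert (H4 : h * Delta <= 2 * INR r * (16 * (c * c * c))).
  { eapply Rle_trans; [exact H2|]. apply Rmult_le_compat_l; nra. }
  replace (11 * Delta ^ 2 * INR n) with (11 * Delta * INR n * Delta) by ring.
  replace (1152 * c ^ 5 * INR r) with (36 * (c * c) * (2 * INR r * (16 * (c * c * c)))) by ring.
  apply Rle_trans with (1 := H3). apply Rmult_le_compat_l; nra.
Qed.

Lemma lg_ge_1 n : (2 <= n)%nat -> 1 <= lg (INR n).
Proof.
  intros Hn. unfold lg. pose proof ln_lt_2 as Hln2.
  assert (H2 : 2 <= INR n) by (apply (le_INR 2), Hn).
  assert (ln 2 <= ln (INR n))
    by (destruct (Rle_lt_or_eq_dec _ _ H2) as [Hlt|<-]; [left; apply ln_increasing|right]; lra).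
  apply (Rmult_le_reg_r (ln 2)); [lra|]. unfold Rdiv. rewrite Rmult_assoc, Rinv_l; lra.
Qed.

Lemma div_sqr_le (x y : R) : 0 <= x -> 1 <= y -> x / y ^ 2 <= x.
Proof.
  intros Hx Hy. unfold Rdiv. rewrite <- (Rmult_1_r x) at 2.
  apply Rmult_le_compat_l; [lra|]. rewrite <- Rinv_1. apply Rinv_le_contravar; nra.
Qed.

Lemma pow4_div_pow9_le (x c : R) : 0 < c -> 0 <= x <= 4 * (c * c) ->
  x ^ 4 / c ^ 9 <= 16 * (x ^ 2 / c ^ 5).
Proof.
  intros Hc Hx.
  assert (Hc2 : 0 < c * c) by nra.
  replace (x ^ 4 / c ^ 9) with ((x * x) / (c * c * (c * c)) * (x ^ 2 / c ^ 5)) by (field; lra).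
  apply Rmult_le_compat_r; [apply Rle_mult_inv_pos; [nra|apply pow_lt, Hc]|].
  apply Rmult_le_reg_r with (c * c * (c * c)); [nra|]. field_simplify; [|lra].
  replace (16 * c ^ 4) with ((4 * (c * c)) ^ 2) by ring. apply pow_incr, Hx.
Qed.

Theorem theorem1 :
  exists alpha : R, 0 < alpha /\
  forall (c Delta : R) (n d : nat) (V : nat -> nat -> R),
    4 < c -> 0 < Delta -> (2 <= n)%nat ->
    exp_tri_S d n V c >= Delta * INR n ->
    forall r : nat, is_rank d n V r ->
    INR r >= alpha * (Delta ^ 4 / c ^ 9) * (INR n / (lg (INR n)) ^ 2).
Proof.
  exists (1 / 2000). split; [lra|].
  intros c Delta n d V Hc HD Hn Htri r Hr.
  assert (HN : 0 < INR n) by (apply lt_0_INR; lia).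
  pose proof (triangle_density_le d n V c Delta ltac:(lra) ltac:(lia) Htri) as HD4.
  pose proof (rank_lower_bound d n V c Delta r ltac:(lra) HD ltac:(lia) Htri Hr) as Hrank.
  pose proof (lg_ge_1 n Hn) as Hlg.
  pose proof (pow4_div_pow9_le Delta c ltac:(lra) ltac:(lra)) as HD49.
  assert (Hc5 : 0 < c ^ 5) by (apply pow_lt; lra).
  apply Rle_ge, Rle_trans with (1 / 2000 * (16 * (Delta ^ 2 / c ^ 5)) * INR n).
  - apply Rmult_le_compat; [| |lra|apply div_sqr_le; lra].
    + apply Rmult_le_pos; [lra|apply Rle_mult_inv_pos; [nra|apply pow_lt; lra]].
    + apply Rle_mult_inv_pos; [lra|apply pow_lt; lra].
  - apply Rmult_le_reg_r with (c ^ 5); [exact Hc5|].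
    replace (1 / 2000 * (16 * (Delta ^ 2 / c ^ 5)) * INR n * c ^ 5)
      with (16 / 2000 * (Delta ^ 2 * INR n)) by (field; lra).
    pose proof (pos_INR r). nra.
Qed.
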